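(* Let $B_0,B_1,\dots,B_{p-1}$ be $p$-dimensional subspaces of $\mathcal M_p(\mathbb C)$, mutually orthogonal for the Hilbert–Schmidt inner product, with $B_0$ the subspace of all diagonal matrices. Let $J_c$ be the passage matrix of a cycle $c$ of maximal length. Then $J_cB_l=B_{l+1}$ for all $0\le l\le p-1$ (with $l+1$ taken mod $p$) if and only if $B_l=\mathrm{span}\{|e_{c(k)}\rangle\langle e_{c(k+l)}|:k=0,1,\dots,p-1\}$ for all $0\le l\le p-1$, where indices are taken mod $p$.
   Context: $\{e_j\}$ canonical basis of $\mathbb C^p$; Hilbert–Schmidt inner product $\langle a,b\rangle=\mathrm{tr}(a^*b)$; $J_cB_l=\{J_cx:x\in B_l\}$. A cycle of maximal length is an ordered sequence $c=(c(0),\dots,c(p-1))$ of the $p$ distinct elements of $\{0,\dots,p-1\}$ (up to cyclic permutation), with passage matrix $J_c=\sum_{i=0}^{p-1}|e_{c(i)}\rangle\langle e_{c(i+1)}|$ (indices mod $p$). *)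

From mathcomp Require Import all_boot all_order all_algebra all_fingroup.
Set Implicit Arguments. Unset Strict Implicit. Unset Printing Implicit Defensive.
Import GRing.Theory Num.Theory.
Local Open Scope ring_scope.

(* Indices in {0,...,p-1} with p = n.+1; addition taken mod p. *)
Definition addmod (n : nat) (k l : nat) : 'I_n.+1 :=
  Ordinal (ltn_pmod (k + l)%N (ltn0Sn n)).

Definition hs_inner (C : numClosedFieldType) (m : nat) (a b : 'M[C]_m) : C :=
  \tr ((map_mx Num.conj a)^T *m b).

(* Passage matrix J_c = sum_i |e_{c(i)}><e_{c(i+1)}| of a cycle of maximal length;
   the cycle (c(0),...,c(p-1)) of the p distinct elements is a permutation c of 'I_p. *)
Definition passage (C : numClosedFieldType) (n : nat) (c : {perm 'I_n.+1}) : 'M[C]_n.+1 :=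
  \sum_(i < n.+1) delta_mx (c i) (c (addmod n i 1)).

Definition left_image_eq (C : numClosedFieldType) (m : nat) (J : 'M[C]_m)
  (B B' : {vspace 'M[C]_m}) : Prop :=
  forall X, X \in B' <-> exists2 Y, Y \in B & X = J *m Y.

Definition cycle_span (C : numClosedFieldType) (n : nat) (c : {perm 'I_n.+1}) (l : 'I_n.+1)
  : {vspace 'M[C]_n.+1} :=
  <<[seq delta_mx (c k) (c (addmod n k l)) | k <- enum 'I_n.+1]>>%VS.

From mathcomp Require Import all_boot all_order all_algebra all_fingroup.
Set Implicit Arguments. Unset Strict Implicit. Unset Printing Implicit Defensive.
Import GRing.Theory Num.Theory.
Local Open Scope ring_scope.

(* J_c sends |e_{c(k+1)}><e_{c(k+1+l)}| to |e_{c(k)}><e_{c(k+(l+1))}|, so it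
   maps the l-th cycle span onto the (l+1)-th one, and the 0-th cycle span is
   the space of diagonal matrices.  Hence the cycle spans and any family with
   J_c B_l = B_{l+1} and B_0 diagonal obey the same recurrence from the same
   initial term, and coincide. *)

Lemma left_image_eqP (C : numClosedFieldType) (m : nat) (J : 'M[C]_m)
    (B B' : {vspace 'M[C]_m}) :
  left_image_eq J B B' <-> B' = (linfun (mulmx J) @: B)%VS.
Proof.
split=> [hJ | -> X]; last first.
  by split=> [/memv_imgP | ] [Y hY ->]; [| apply/memv_imgP]; exists Y; rewrite ?lfunE.
apply/vspaceP => X; apply/idP/memv_imgP => [/hJ [Y hY ->] | [Y hY ->]].
  by exists Y; rewrite ?lfunE.
by apply/hJ; exists Y; rewrite ?lfunE.
Qed.

Lemma span_reindex (K : fieldType) (V : vectType K) (p : nat)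
    (g : 'I_p -> 'I_p) (F : 'I_p -> V) :
  bijective g -> (<<map (F \o g) (enum 'I_p)>> = <<map F (enum 'I_p)>>)%VS.
Proof.
case=> h gK hK; apply: eq_span => x.
apply/mapP/mapP => -[k _ ->] /=; first by exists (g k); rewrite ?mem_enum.
by exists (h k); rewrite ?mem_enum /= ?hK.
Qed.

Section CyclicIndices.
Variable n : nat.

Lemma addmod0 (k : 'I_n.+1) : addmod n k 0 = k.
Proof. by apply: val_inj; rewrite /= addn0 modn_small. Qed.

Lemma addmod1 (k : 'I_n.+1) : addmod n k 1 = ordS k.
Proof. by apply: val_inj; rewrite /= addn1. Qed.

Lemma addmodSl (k l : 'I_n.+1) :
  addmod n (addmod n k 1) l = addmod n k (addmod n l 1).
Proof. by apply: val_inj => /=; rewrite modnDml modnDmr addnAC addnA. Qed.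

Lemma eq_cyclic_recurrence (T : Type) (f : T -> T) (u v : 'I_n.+1 -> T) :
  u ord0 = v ord0 ->
  (forall l : 'I_n.+1, u (addmod n l 1) = f (u l)) ->
  (forall l : 'I_n.+1, v (addmod n l 1) = f (v l)) ->
  u =1 v.
Proof.
move=> uv0 uS vS [k hk]; elim: k hk => [|k IHk] hk.
  by rewrite (_ : Ordinal _ = ord0) //; apply: val_inj.
have hk' : (k < n.+1)%N by apply: ltnW.
have -> : Ordinal hk = addmod n (Ordinal hk') 1.
  by apply: val_inj; rewrite /= addn1 modn_small.
by rewrite uS vS IHk.
Qed.

End CyclicIndices.

Section CycleSpan.
Variables (C : numClosedFieldType) (n : nat) (c : {perm 'I_n.+1}).

Lemma passage_mul_delta (k y : 'I_n.+1) :
  passage C c *m delta_mx (c (addmod n k 1)) y = delta_mx (c k) y.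
Proof.
rewrite /passage mulmx_suml (bigD1 k) //= mul_delta_mx big1 ?addr0 // => i ki.
rewrite mul_delta_mx_cond (inj_eq perm_inj) !addmod1 (inj_eq (@ordS_inj _)).
by rewrite (negPf ki) mulr0n.
Qed.

Lemma cycle_span_shift (l : 'I_n.+1) :
  cycle_span C c (addmod n l 1) = (linfun (mulmx (passage C c)) @: cycle_span C c l)%VS.
Proof.
rewrite /cycle_span limg_span -[in RHS]map_comp.
apply: etrans _ (span_reindex _ (ordS_bij n.+1)); congr <<_>>%VS.
by apply: eq_map => k; rewrite /comp lfunE -addmod1 /= passage_mul_delta addmodSl.
Qed.

Lemma cycle_span0 :
  cycle_span C c ord0 = <<[seq delta_mx i i | i <- enum 'I_n.+1]>>%VS.
Proof.
apply: esym; apply: etrans (esym (span_reindex _ (injF_bij (@perm_inj _ c)))) _.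
by congr <<_>>%VS; apply: eq_map => k; rewrite /comp addmod0.
Qed.

Lemma diag_vspace_cycle_span0 (B0 : {vspace 'M[C]_n.+1}) :
  (forall A, A \in B0 <-> is_diag_mx A) -> B0 = cycle_span C c ord0.
Proof.
move=> hB; rewrite cycle_span0; apply/subv_anti/andP; split.
  apply/subvP => A /hB /is_diag_mxP hA; rewrite [A]matrix_sum_delta.
  apply: memv_suml => i _; rewrite (bigD1 i) //= big1 ?addr0.
    by apply/memvZ/memv_span/map_f; rewrite mem_enum.
  by move=> j ji; rewrite hA ?scale0r // eq_sym.
apply/span_subvP => _ /mapP [i _ ->]; apply/hB/is_diag_mxP => j k jk.
rewrite mxE; case: (eqVneq j i) jk => [->|] //=.
by case: (eqVneq k i) => [->|] //; rewrite eqxx.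
Qed.

End CycleSpan.

Theorem mainTheorem8 (C : numClosedFieldType) (n : nat)
  (B : 'I_n.+1 -> {vspace 'M[C]_n.+1}) (c : {perm 'I_n.+1}) :
  (forall l, \dim (B l) = n.+1) ->
  (forall l l', l != l' -> forall a b, a \in B l -> b \in B l' -> hs_inner a b = 0) ->
  (forall A, A \in B ord0 <-> is_diag_mx A) ->
  (forall l : 'I_n.+1, left_image_eq (passage C c) (B l) (B (addmod n l 1)))
  <-> (forall l, B l = cycle_span C c l).
Proof.
move=> _ _ hdiag; split=> [hJ | hB l].
  apply: (eq_cyclic_recurrence (f := fun V => linfun (mulmx (passage C c)) @: V)%VS).
  - exact: diag_vspace_cycle_span0.
  - by move=> l; apply/left_image_eqP.
  - exact: cycle_span_shift.
by apply/left_image_eqP; rewrite !hB cycle_span_shift.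
Qed.
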